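(* Let $\pi$ be a permutation-invariant probability density on $\mathbb{X}^n$ and $q$ a probability density on $\mathbb{X}$. Consider Stage 1 of the SOMA sampler: from the current state $x\in\mathbb{X}^n$, draw $y\sim q$, select an index $I\in\{1,\dots,n\}$ with $\mathbb{P}(I=i)=w_i(y,x)/W(y,x)$, and propose $x'=[x_{-I},y]$. Denote the density of this proposal by $K^{\mathrm{SOMA}}(x'\mid x)$. For $x,x'\in\mathbb{X}^n$ let $d(x,x')=\min_{\sigma\in S_n}\|x_\sigma-x'\|_0$, where $x_\sigma=(x_{\sigma(1)},\dots,x_{\sigma(n)})$ and $\|\cdot\|_0$ counts nonzero entries (i.e. the number of differing components). Then $K^{\mathrm{SOMA}}(x'\mid x)=0$ whenever $d(x,x')>1$; and when $d(x,x')=1$ with $x$ and $x'$ differing only in the $i$-th entry, $x'_i=y$ and $x'_j=x_j$ for $j\neq i$, one has $K^{\mathrm{SOMA}}(x'\mid x)=q(y)\,w_i(y,x)/W(y,x)$. Moreover, combining this proposal with acceptance probability $\alpha_i^{\mathrm{SOMA}}(y,x)=\min\{1,\,W(y,x)/(W(y,x)+w_0(y,x)-w_i(y,x))\}$ (Stage 2) yields a Markov transition kernel $P_{\mathrm{SOMA}}$ that is reversible with respect to $\pi$.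
   Context: $\mathbb{X}$ is a measurable state space and $n\ge1$. The density $\pi$ on $\mathbb{X}^n$ is permutation invariant: $\pi(x_{\sigma(1)},\dots,x_{\sigma(n)})=\pi(x_1,\dots,x_n)$ for every permutation $\sigma$ of $\{1,\dots,n\}$. For $x\in\mathbb{X}^n$, $y\in\mathbb{X}$ and $i\in\{1,\dots,n\}$, $[x_{-i},y]$ denotes the vector obtained from $x$ by replacing its $i$-th component with $y$. The weights are $w_i(y,x)=\pi([x_{-i},y])/\big(q(y)\prod_{j\ne i}q(x_j)\big)$ for $i=1,\dots,n$, $w_0(y,x)=\pi(x)/\prod_{j=1}^n q(x_j)$, and $W(y,x)=\sum_{i=1}^n w_i(y,x)$ (densities are such that these are well-defined and positive). The SOMA sampler: from $x$, draw $y\sim q$, select $I$ with probability $w_I/W$, and replace $x_I$ by $y$ with probability $\alpha_I^{\mathrm{SOMA}}(y,x)$, otherwise stay at $x$. *)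

From HB Require Import structures.
From mathcomp Require Import all_boot all_order all_algebra.
From mathcomp Require Import fingroup perm.
From mathcomp Require Import all_classical all_reals all_analysis.
From mathcomp Require Import measurable_realfun.

Set Implicit Arguments.
Unset Strict Implicit.
Unset Printing Implicit Defensive.

Import Order.TTheory GRing.Theory Num.Theory.
Local Open Scope classical_set_scope.
Local Open Scope ring_scope.

(* State space X^n is represented by n.-tuple X, with the product
   sigma-algebra provided by MathComp-Analysis (generated by the tnth
   projections).  Components are indexed by 'I_n = {0,...,n-1}. *)

Section SOMA.
Context {d : measure_display} {X : measurableType d} {R : realType} {n : nat}.

Definition repl (x : n.-tuple X) (i : 'I_n) (y : X) : n.-tuple X :=
  [tuple (if j == i then y else tnth x j) | j < n].

Definition permt (s : 'S_n) (x : n.-tuple X) : n.-tuple X :=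
  [tuple tnth x (s j) | j < n].

Definition soma_dist (x x' : n.-tuple X) : nat :=
  \big[minn/n]_(s : 'S_n) #|[set j : 'I_n | tnth (permt s x) j != tnth x' j]|.

Variables (pi : n.-tuple X -> R) (q : X -> R).

Definition wi (i : 'I_n) (y : X) (x : n.-tuple X) : R :=
  pi (repl x i y) / (q y * \prod_(j < n | j != i) q (tnth x j)).

Definition w0 (y : X) (x : n.-tuple X) : R :=
  pi x / \prod_(j < n) q (tnth x j).

Definition Wsum (y : X) (x : n.-tuple X) : R := \sum_(i < n) wi i y x.

Definition alpha (i : 'I_n) (y : X) (x : n.-tuple X) : R :=
  Num.min 1 (Wsum y x / (Wsum y x + w0 y x - wi i y x)).

Variable mu : {measure set X -> \bar R}.

(* Stage 1 of SOMA, as a distribution: K^SOMA(x, A) = P(x' in A) where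
   y ~ q dmu, I = i w.p. w_i/W, x' = [x_{-I}, y]. *)
Definition Kprop (x : n.-tuple X) (A : set (n.-tuple X)) : \bar R :=
  (\int[mu]_y (q y * \sum_(i < n) (wi i y x / Wsum y x) *
                     \1_A (repl x i y))%:E)%E.

Definition Psoma (x : n.-tuple X) (A : set (n.-tuple X)) : \bar R :=
  (\int[mu]_y (q y * \sum_(i < n) (wi i y x / Wsum y x) *
       (alpha i y x * \1_A (repl x i y) + (1 - alpha i y x) * \1_A x))%:E)%E.

End SOMA.

From HB Require Import structures.
From mathcomp Require Import all_boot all_order all_algebra.
From mathcomp Require Import fingroup perm.
From mathcomp Require Import all_classical all_reals all_analysis.
From mathcomp Require Import measurable_realfun.
From mathcomp Require Import ring.

Import Order.TTheory GRing.Theory Num.Theory.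
Local Open Scope classical_set_scope.
Local Open Scope ring_scope.

Set Implicit Arguments.
Unset Strict Implicit.
Unset Printing Implicit Defensive.

(* Stage 1 only ever replaces one coordinate: choosing the index i and the new
   value y puts sub-density q(y) w_i(y,x)/W(y,x) on the point [x_{-i}, y], so the
   proposal lives on the n lines through x, that is on the points at distance at
   most 1 from x.

   Reversibility is detailed balance along each line.  The involution
   (x, y) |-> ([x_{-i}, y], x_i) preserves mu^n (x) mu, as one checks on boxes.
   By permutation invariance of pi it exchanges w_i and w_0 and fixes w_j for
   j <> i, which makes pi(x) q(y) (w_i/W)(y,x) alpha_i(y,x) invariant under it;
   the rejection part of the flow from A to B is trivially symmetric in A, B. *)

Lemma measurable_invr (R : realType) : measurable_fun [set: R] (@GRing.inv R).
Proof.
rewrite -(setUv [set 0]); apply/measurable_funU => //; first exact: measurableC.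
split; first exact: measurable_fun_set1.
apply: open_continuous_measurable_fun.
  exact/closed_openC/accessible_closed_set1/hausdorff_accessible/Rhausdorff.
by move=> x /set_mem /eqP x0; exact: inv_continuous.
Qed.

Section replace_coordinate.
Context {d : measure_display} {X : measurableType d} {n : nat}.
Implicit Types (x : n.-tuple X) (i j : 'I_n) (y : X).

Lemma tnth_repl x i y j : tnth (repl x i y) j = if j == i then y else tnth x j.
Proof. by rewrite tnth_mktuple. Qed.

Lemma repl_tnth x i : repl x i (tnth x i) = x.
Proof. by apply: eq_from_tnth => j; rewrite tnth_repl; case: eqP => // ->. Qed.

Lemma repl_repl x i y z : repl (repl x i y) i z = repl x i z.
Proof. by apply: eq_from_tnth => j; rewrite !tnth_repl; case: eqP. Qed.

Lemma repl_repl_tperm x i j y : j != i ->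
  repl (repl x i y) j (tnth x i) = permt (tperm i j) (repl x j y).
Proof.
move=> ji; have ij : i != j by rewrite eq_sym.
apply: eq_from_tnth => k; rewrite /permt tnth_mktuple !tnth_repl.
by case: tpermP => [->|->|/eqP ki /eqP kj];
  rewrite ?(negbTE ij) ?(negbTE ki) ?(negbTE kj) ?eqxx.
Qed.

Lemma measurable_repl i :
  measurable_fun [set: n.-tuple X * X] (fun p => repl p.1 i p.2).
Proof.
apply/measurable_fun_tnthP => j.
rewrite (_ : _ \o _ = fun p => if j == i then p.2 else tnth p.1 j); last first.
  by apply/funext => p /=; rewrite tnth_repl.
case: eqP => _; first exact: measurable_snd.
exact: measurableT_comp (measurable_tnth j) measurable_fst.
Qed.

Definition swap_coord i (p : n.-tuple X * X) := (repl p.1 i p.2, tnth p.1 i).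

Lemma measurable_swap_coord i : measurable_fun setT (swap_coord i).
Proof.
apply/measurable_fun_pairP; split; first exact: measurable_repl.
exact: measurableT_comp (measurable_tnth i) measurable_fst.
Qed.

End replace_coordinate.

Section boxes.
Context {d : measure_display} {X : measurableType d} {n : nat}.
Implicit Types (A : 'I_n -> set X) (B : set X).

Definition box A : set (n.-tuple X) := [set x | forall i, A i (tnth x i)].

Lemma measurable_box A : (forall i, measurable (A i)) -> measurable (box A).
Proof.
move=> mA.
rewrite (_ : box A = \bigcap_(i in [set: 'I_n]) ((fun x => tnth x i) @^-1` A i)).
  apply: fin_bigcap_measurable; first exact: finite_finset.
  by move=> i _; rewrite -[X in measurable X]setTI; exact: measurable_tnth.
by apply/seteqP; split => x /= Ax i; [move=> _|]; apply: Ax.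
Qed.

Lemma setI_boxX A B A' B' : (box A `*` B) `&` (box A' `*` B') =
  box (fun i => A i `&` A' i) `*` (B `&` B').
Proof.
apply/seteqP; split => -[x y] /=; first by move=> [[Ax By] [A'x B'y]].
by move=> [AA'x [By B'y]]; split; split => // i; case: (AA'x i).
Qed.

Lemma preimage_swap_coord_boxX i A B : swap_coord i @^-1` (box A `*` B) =
  box (fun j => if j == i then B else A j) `*` A i.
Proof.
apply/seteqP; split => -[x y] /=.
  move=> [Ax Bxi]; split; last by have := Ax i; rewrite tnth_repl eqxx.
  move=> j /=; case: ifPn => [/eqP -> // | ji].
  by have := Ax j; rewrite tnth_repl (negbTE ji).
move=> [Bx Ay]; split; last by have := Bx i; rewrite /= eqxx.
move=> j; rewrite tnth_repl.
by case: ifPn (Bx j) => [/eqP -> _ // | ji].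
Qed.

Lemma box_cover (F : (set X)^nat) : [set: X] = \bigcup_k F k ->
  nondecreasing_seq F -> forall x : n.-tuple X, exists k, box (fun=> F k) x.
Proof.
move=> TF ndF x.
have Fx i : exists k, F k (tnth x i).
  by have : [set: X] (tnth x i) by []; rewrite TF => -[k _]; exists k.
pose k i := projT1 (cid (Fx i)).
exists (\max_i k i) => i; have := projT2 (cid (Fx i)).
by have /subsetPset := ndF _ _ (leq_bigmax (F := k) i); apply.
Qed.

Definition box_rectangles : set (set (n.-tuple X * X)) :=
  [set C | exists A B, [/\ (forall i, measurable (A i)), measurable B &
                          C = box A `*` B]].

Let box_rectangles_sigma := g_sigma_algebraType box_rectangles.

Lemma box_rectangles_fst (E : set (n.-tuple X)) : measurable E ->
  <<s box_rectangles >> (fst @^-1` E).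
Proof.
move: E; apply: smallest_sub.
  split.
  - by rewrite preimage_set0; exact: (@measurable0 _ box_rectangles_sigma).
  - move=> E mE; rewrite (_ : _ @^-1` _ = setT `\` fst @^-1` E); last first.
      by apply/seteqP; split => -[x y].
    exact: (@measurableD _ box_rectangles_sigma).
  - move=> F mF; rewrite preimage_bigcup.
    exact: (@bigcupT_measurable _ box_rectangles_sigma).
apply: (big_ind (fun K => K `<=` _)); [exact: sub0set|by move=> *; rewrite subUset|].
move=> i _ _ [B mB <-]; rewrite setTI; apply: sub_sigma_algebra.
exists (fun j => if j == i then B else setT), setT; split => //.
  by move=> j; case: eqP.
apply/seteqP; split => -[x y] /=; first by move=> Bx; split => // j; case: eqP => // ->.
by move=> [Bx _]; have := Bx i; rewrite eqxx.
Qed.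

Lemma measurable_sub_box_rectangles :
  @measurable _ (n.-tuple X * X)%type `<=` <<s box_rectangles >>.
Proof.
apply: smallest_sub; first exact: smallest_sigma_algebra.
rewrite subUset; split=> _ [E mE <-]; rewrite setTI; first exact: box_rectangles_fst.
apply: sub_sigma_algebra; exists (fun=> setT), E; split => //.
by apply/seteqP; split => -[x y] //= [].
Qed.

End boxes.

(* HB attaches structures to constants only, hence this copy of [m] indexed by
   a proof of its sigma-finiteness. *)
Definition sigma_finite_copy {d} {T : measurableType d} {R : realType}
  {m : {measure set T -> \bar R}} (_ : sigma_finite setT m) : set T -> \bar R := m.
HB.instance Definition _ d (T : measurableType d) (R : realType)
  (m : {measure set T -> \bar R}) (h : sigma_finite setT m) :=
  Measure.copy (sigma_finite_copy h) m.
HB.instance Definition _ d (T : measurableType d) (R : realType)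
  (m : {measure set T -> \bar R}) (h : sigma_finite setT m) :=
  Measure_isSigmaFinite.Build d T R (sigma_finite_copy h) h.

Section product_tuple_coordinate.
Local Open Scope ereal_scope.
Context {d : measure_display} {X : measurableType d} {R : realType} {n : nat}.
Variable mu : {measure set X -> \bar R}.
Hypothesis mu_sigma_finite : sigma_finite setT mu.
Variable lam : {measure set (n.-tuple X) -> \bar R}.
Hypothesis lam_box : forall A : 'I_n -> set X, (forall i, measurable (A i)) ->
  lam (box A) = \prod_(i < n) mu (A i).

Lemma lam_sigma_finite : sigma_finite setT lam.
Proof.
have /sigma_finiteP[F [TF ndF Ffin]] := mu_sigma_finite.
exists (fun k => box (fun=> F k)).
  by apply/seteqP; split => // x _; have [k] := box_cover TF ndF x; exists k.
move=> k; have [mFk muFk] := Ffin k.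
split; first exact: measurable_box.
rewrite lam_box // -ge0_fin_numE; last exact: prode_ge0.
by apply: prode_fin_num => i _; rewrite ge0_fin_numE.
Qed.

Let lamS : {sigma_finite_measure set (n.-tuple X) -> \bar R} :=
  sigma_finite_copy lam_sigma_finite.
Let muS : {sigma_finite_measure set X -> \bar R} := sigma_finite_copy mu_sigma_finite.
Let lam_mu := lamS \x muS.

Lemma product_boxX A B : (forall i, measurable (A i)) -> measurable B ->
  lam_mu (box A `*` B) = (\prod_(i < n) mu (A i)) * mu B.
Proof.
by move=> mA mB; rewrite /lam_mu product_measure1E //= ?lam_box //; exact: measurable_box.
Qed.

Lemma product_preimage_swap_coord_boxX i A B :
  (forall j, measurable (A j)) -> measurable B ->
  lam_mu (swap_coord i @^-1` (box A `*` B)) = lam_mu (box A `*` B).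
Proof.
move=> mA mB; rewrite preimage_swap_coord_boxX !product_boxX //; last first.
  by move=> j; case: eqP.
rewrite (bigD1 i) //= eqxx [in RHS](bigD1 i) //=.
rewrite (eq_bigr (fun j => mu (A j))) => [|j /negbTE -> //].
by rewrite [mu B * _]muleC muleAC [_ * mu (A i)]muleC.
Qed.

Lemma product_preimage_swap_coord i E : measurable E ->
  lam_mu (swap_coord i @^-1` E) = lam_mu E.
Proof.
move=> mE; have mT := measurable_swap_coord (X := X) i.
pose lam_muT :=
  measure_function_pushforward__canonical__measure_function_Measure lam_mu mT.
have /sigma_finiteP[F [TF ndF Ffin]] := mu_sigma_finite.
have mF k : measurable (F k) by case: (Ffin k).
apply/esym; apply: (@g_sigma_algebra_measure_unique _ _ _ box_rectangles _
  (fun k => box (fun=> F k) `*` F k) _ _ lam_mu lam_muT); last 2 first.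
- move=> k; rewrite [X in X < _](_ : _ = (\prod_(j < n) mu (F k)) * mu (F k)); last first.
    exact: product_boxX.
  have muFk : mu (F k) \is a fin_num by rewrite ge0_fin_numE; case: (Ffin k).
  by rewrite -ge0_fin_numE ?mule_ge0 ?prode_ge0 // fin_numM // prode_fin_num.
- exact: measurable_sub_box_rectangles.
- by move=> _ [A [B [mA mB ->]]]; apply: measurableX => //; exact: measurable_box.
- by move=> k; exists (fun=> F k), (F k).
- apply/seteqP; split => // -[x y] _.
  have [K FKx] := box_cover TF ndF x.
  have : [set: X] y by []; rewrite TF => -[k _ Fky].
  exists (maxn K k) => //; split.
    by move=> j; have /subsetPset := ndF _ _ (leq_maxl K k); apply; exact: FKx.
  by have /subsetPset := ndF _ _ (leq_maxr K k); apply.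
- move=> _ _ [A [B [mA mB ->]]] [A' [B' [mA' mB' ->]]].
  rewrite setI_boxX; exists (fun i => A i `&` A' i), (B `&` B'); split => //.
    by move=> j; exact: measurableI.
  exact: measurableI.
- move=> _ [A [B [mA mB ->]]].
  rewrite (_ : lam_muT _ = lam_mu (swap_coord i @^-1` (box A `*` B))) //.
  by rewrite product_preimage_swap_coord_boxX.
Qed.

Lemma integral_swap_coord i (H : n.-tuple X * X -> \bar R) :
  measurable_fun setT H -> (forall p, 0 <= H p) ->
  \int[lam]_x \int[mu]_y H (x, y) = \int[lam]_x \int[mu]_y H (swap_coord i (x, y)).
Proof.
move=> mH H0; have mT := measurable_swap_coord (X := X) i.
have fubini G : measurable_fun setT G -> (forall p, 0 <= G p) ->
    \int[lam]_x \int[mu]_y G (x, y) = \int[lam_mu]_z G z.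
  by move=> mG G0; apply/esym; exact: (fubini_tonelli1 (m1 := lamS) (m2 := muS) G mG G0).
have mHT : measurable_fun setT (H \o swap_coord i) by exact: measurableT_comp.
rewrite fubini // (fubini (H \o swap_coord i)) //; last by move=> p; exact: H0.
transitivity (\int[pushforward lam_mu (swap_coord i)]_z H z).
  by apply: eq_measure_integral => A mA _; exact/esym/(product_preimage_swap_coord i mA).
by rewrite ge0_integral_pushforward // preimage_setT.
Qed.

End product_tuple_coordinate.

Lemma invr_mul_min1 (R : realFieldType) (a b : R) : 0 < a -> 0 < b ->
  a^-1 * Num.min 1 (a / b) = Num.min a^-1 b^-1.
Proof. by move=> a0 b0; rewrite minr_pMr ?invr_ge0 ?ltW // mulr1 mulKf // gt_eqF. Qed.

Section weights.
Context {d : measure_display} {X : measurableType d} {R : realType} {n : nat}.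
Variables (pi : n.-tuple X -> R) (q : X -> R).
Hypothesis n_gt0 : (0 < n)%N.
Hypothesis q_gt0 : forall y, 0 < q y.
Hypothesis pi_gt0 : forall x, 0 < pi x.
Hypothesis pi_perm : forall (s : 'S_n) x, pi (permt s x) = pi x.
Implicit Types (x : n.-tuple X) (i j : 'I_n) (y : X).

Definition qprod_except x i := \prod_(j < n | j != i) q (tnth x j).

Definition Wsum_except i y x := \sum_(j < n | j != i) wi pi q j y x.

Lemma qprod_except_gt0 x i : 0 < qprod_except x i.
Proof. by apply: prodr_gt0 => j _. Qed.

Lemma prodq_bigD1 x i : \prod_(j < n) q (tnth x j) = q (tnth x i) * qprod_except x i.
Proof. by rewrite (bigD1 i). Qed.

Lemma qprod_except_repl x i y : qprod_except (repl x i y) i = qprod_except x i.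
Proof. by apply: eq_bigr => j /negbTE ji; rewrite tnth_repl ji. Qed.

Lemma wi_gt0 i y x : 0 < wi pi q i y x.
Proof. by rewrite divr_gt0 // mulr_gt0 //; exact: qprod_except_gt0. Qed.

Lemma w0_gt0 y x : 0 < w0 pi q y x.
Proof. by rewrite divr_gt0 //; apply: prodr_gt0. Qed.

Lemma Wsum_bigD1 i y x : Wsum pi q y x = wi pi q i y x + Wsum_except i y x.
Proof. by rewrite /Wsum (bigD1 i). Qed.

Lemma Wsum_except_ge0 i y x : 0 <= Wsum_except i y x.
Proof. by apply: sumr_ge0 => j _; exact/ltW/wi_gt0. Qed.

Lemma Wsum_gt0 y x : 0 < Wsum pi q y x.
Proof.
rewrite (Wsum_bigD1 (Ordinal n_gt0)).
exact: ltr_wpDr (Wsum_except_ge0 _ _ _) (wi_gt0 _ _ _).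
Qed.

Lemma alphaE i y x : alpha pi q i y x =
  Num.min 1 (Wsum pi q y x / (w0 pi q y x + Wsum_except i y x)).
Proof. by rewrite /alpha; congr (Num.min 1 (_ / _)); rewrite (Wsum_bigD1 i); ring. Qed.

Lemma alpha_ge0 i y x : 0 <= alpha pi q i y x.
Proof.
rewrite alphaE le_min ler01 divr_ge0 ?ltW ?Wsum_gt0 //.
exact: ltr_wpDr (Wsum_except_ge0 _ _ _) (w0_gt0 _ _).
Qed.

Lemma alpha_le1 i y x : alpha pi q i y x <= 1.
Proof. by rewrite ge_min lexx. Qed.

Lemma wi_repl_tnth x i y : wi pi q i (tnth x i) (repl x i y) = w0 pi q y x.
Proof.
rewrite /wi /w0 repl_repl repl_tnth (prodq_bigD1 x i).
by rewrite -[X in q _ * X]/(qprod_except _ i) qprod_except_repl.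
Qed.

Lemma w0_repl_tnth x i y : w0 pi q (tnth x i) (repl x i y) = wi pi q i y x.
Proof.
by rewrite /wi /w0 (prodq_bigD1 _ i) tnth_repl eqxx qprod_except_repl.
Qed.

Lemma wj_repl_tnth x i j y : j != i ->
  wi pi q j (tnth x i) (repl x i y) = wi pi q j y x.
Proof.
move=> ji; rewrite /wi repl_repl_tperm // pi_perm; congr (_ / _).
rewrite (bigD1 i) 1?eq_sym //= [in RHS](bigD1 i) 1?eq_sym //= tnth_repl eqxx.
rewrite mulrCA; congr (_ * (_ * _)).
by apply: eq_bigr => k /andP[_ /negbTE ki]; rewrite tnth_repl ki.
Qed.

Lemma Wsum_except_repl_tnth x i y :
  Wsum_except i (tnth x i) (repl x i y) = Wsum_except i y x.
Proof. by apply: eq_bigr => j ji; rewrite wj_repl_tnth. Qed.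

Definition proposal_rate i x y := q y * (wi pi q i y x / Wsum pi q y x).

Definition accept_rate i x y := proposal_rate i x y * alpha pi q i y x.

Definition reject_rate x y := \sum_(i < n) proposal_rate i x y * (1 - alpha pi q i y x).

Lemma proposal_rate_ge0 i x y : 0 <= proposal_rate i x y.
Proof.
apply: mulr_ge0; first exact/ltW.
by apply: divr_ge0; apply/ltW; [exact: wi_gt0|exact: Wsum_gt0].
Qed.

Lemma sum_proposal_rate x y : \sum_(i < n) proposal_rate i x y = q y.
Proof. by rewrite -mulr_sumr -mulr_suml divff ?mulr1 // gt_eqF ?Wsum_gt0. Qed.

Lemma accept_rate_ge0 i x y : 0 <= accept_rate i x y.
Proof. by rewrite mulr_ge0 ?proposal_rate_ge0 ?alpha_ge0. Qed.

Lemma reject_rate_ge0 x y : 0 <= reject_rate x y.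
Proof.
by apply: sumr_ge0 => i _; rewrite mulr_ge0 ?proposal_rate_ge0 // subr_ge0 alpha_le1.
Qed.

(* With u = w_i, v = w_0 and S = W - w_i, both sides equal
   q(x_i) q(y) prod_{j<>i} q(x_j) * u v min(1/(u + S), 1/(v + S)),
   and the swap exchanges u and v while fixing S. *)
Lemma detailed_balance x i y :
  pi x * accept_rate i x y = pi (repl x i y) * accept_rate i (repl x i y) (tnth x i).
Proof.
have qD_gt0 z : 0 < q z * qprod_except x i by rewrite mulr_gt0 ?qprod_except_gt0.
have -> : pi x = w0 pi q y x * (q (tnth x i) * qprod_except x i).
  by rewrite /w0 (prodq_bigD1 x i) divfK // gt_eqF.
have -> : pi (repl x i y) = wi pi q i y x * (q y * qprod_except x i).
  by rewrite /wi divfK // gt_eqF.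
rewrite /accept_rate /proposal_rate !alphaE !(Wsum_bigD1 i).
rewrite wi_repl_tnth w0_repl_tnth Wsum_except_repl_tnth.
have := wi_gt0 i y x; have := w0_gt0 y x; have := Wsum_except_ge0 i y x.
move: (wi _ _ _ _ _) (w0 _ _ _ _) (Wsum_except _ _ _) => u v S S0 v0 u0.
rewrite -!mulrA !invr_mul_min1 ?ltr_wpDr // [Num.min (v + S)^-1 _]minC.
ring.
Qed.

End weights.

Section weights_measurable.
Context {d : measure_display} {X : measurableType d} {R : realType} {n : nat}.
Variables (pi : n.-tuple X -> R) (q : X -> R).
Hypothesis mq : measurable_fun setT q.
Hypothesis mpi : measurable_fun setT pi.
Local Notation T := (n.-tuple X * X)%type.

Lemma measurable_indic_fst (B : set (n.-tuple X)) : measurable B ->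
  measurable_fun [set: T] (fun p => \1_B p.1 : R).
Proof.
by move=> mB; exact: measurableT_comp (measurable_indic (D := setT) (R := R) mB) measurable_fst.
Qed.

Lemma measurable_indic_repl (B : set (n.-tuple X)) i : measurable B ->
  measurable_fun [set: T] (fun p => \1_B (repl p.1 i p.2) : R).
Proof.
move=> mB; apply: measurableT_comp (measurable_repl i).
exact: (measurable_indic (D := setT) (R := R) mB).
Qed.

Let measurable_q_snd : measurable_fun [set: T] (fun p => q p.2).
Proof. exact: measurableT_comp mq measurable_snd. Qed.

Let measurable_prodq (P : pred 'I_n) :
  measurable_fun [set: T] (fun p => \prod_(j < n | P j) q (tnth p.1 j)).
Proof.
under eq_fun do rewrite big_mkcond.
apply: measurable_prod => j _; case: (P j); last exact: measurable_cst.
exact: measurableT_comp mq (measurableT_comp (measurable_tnth j) measurable_fst).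
Qed.

Lemma measurable_wi i : measurable_fun [set: T] (fun p => wi pi q i p.2 p.1).
Proof.
apply: measurable_funM; first exact: measurableT_comp mpi (measurable_repl i).
apply: measurableT_comp (@measurable_invr R) _.
by apply: measurable_funM; [exact: measurable_q_snd|exact: measurable_prodq].
Qed.

Lemma measurable_w0 : measurable_fun [set: T] (fun p => w0 pi q p.2 p.1).
Proof.
apply: measurable_funM; first exact: measurableT_comp mpi measurable_fst.
exact: measurableT_comp (@measurable_invr R) (measurable_prodq predT).
Qed.

Lemma measurable_Wsum : measurable_fun [set: T] (fun p => Wsum pi q p.2 p.1).
Proof. by apply: measurable_sum => i; exact: measurable_wi. Qed.

Lemma measurable_alpha i : measurable_fun [set: T] (fun p => alpha pi q i p.2 p.1).
Proof.
apply: measurable_minr; first exact: measurable_cst.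
apply: measurable_funM; first exact: measurable_Wsum.
apply: measurableT_comp (@measurable_invr R) _.
apply: measurable_funB; last exact: measurable_wi.
by apply: measurable_funD; [exact: measurable_Wsum|exact: measurable_w0].
Qed.

Lemma measurable_proposal_rate i :
  measurable_fun [set: T] (fun p => proposal_rate pi q i p.1 p.2).
Proof.
apply: measurable_funM; first exact: measurable_q_snd.
apply: measurable_funM; first exact: measurable_wi.
exact: measurableT_comp (@measurable_invr R) measurable_Wsum.
Qed.

Lemma measurable_accept_rate i :
  measurable_fun [set: T] (fun p => accept_rate pi q i p.1 p.2).
Proof.
by apply: measurable_funM; [exact: measurable_proposal_rate|exact: measurable_alpha].
Qed.

Lemma measurable_reject_rate :
  measurable_fun [set: T] (fun p => reject_rate pi q p.1 p.2).
Proof.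
apply: measurable_sum => i; apply: measurable_funM; first exact: measurable_proposal_rate.
by apply: measurable_funB; [exact: measurable_cst|exact: measurable_alpha].
Qed.

End weights_measurable.

Section soma_kernel.
Context {d : measure_display} {X : measurableType d} {R : realType} {n : nat}.
Variable mu : {measure set X -> \bar R}.
Hypothesis mu_sigma_finite : sigma_finite setT mu.
Variables (pi : n.-tuple X -> R) (q : X -> R).
Hypothesis n_gt0 : (0 < n)%N.
Hypothesis q_gt0 : forall y, 0 < q y.
Hypothesis pi_gt0 : forall x, 0 < pi x.
Hypothesis mq : measurable_fun setT q.
Hypothesis mpi : measurable_fun setT pi.
Implicit Types (x : n.-tuple X) (i : 'I_n) (y : X) (A B : set (n.-tuple X)).
Local Notation T := (n.-tuple X * X)%type.

Let measurable_integral_snd (F : T -> \bar R) :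
  measurable_fun setT F -> (forall p, (0 <= F p)%E) ->
  measurable_fun setT (fun x => \int[mu]_y F (x, y))%E.
Proof.
exact: (measurable_fun_fubini_tonelli_F (m2 := sigma_finite_copy mu_sigma_finite)).
Qed.

Definition psoma_integrand B x y :=
  \sum_(i < n) accept_rate pi q i x y * \1_B (repl x i y) + reject_rate pi q x y * \1_B x.

Lemma PsomaE x B : Psoma pi q mu x B = (\int[mu]_y (psoma_integrand B x y)%:E)%E.
Proof.
apply: eq_integral => y _; congr EFin.
rewrite mulr_sumr /psoma_integrand /reject_rate big_distrl -big_split.
by apply: eq_bigr => i _ /=; rewrite /accept_rate /proposal_rate; ring.
Qed.

Lemma psoma_integrand_ge0 B x y : 0 <= psoma_integrand B x y.
Proof.
apply: addr_ge0; last by rewrite mulr_ge0 ?reject_rate_ge0.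
by apply: sumr_ge0 => i _; rewrite mulr_ge0 ?accept_rate_ge0.
Qed.

Lemma measurable_psoma_integrand B : measurable B ->
  measurable_fun [set: T] (fun p => psoma_integrand B p.1 p.2).
Proof.
move=> mB; apply: measurable_funD.
  apply: measurable_sum => i; apply: measurable_funM; first exact: measurable_accept_rate.
  exact: measurable_indic_repl.
apply: measurable_funM; first exact: measurable_reject_rate.
exact: measurable_indic_fst.
Qed.

Lemma Psoma_ge0 x B : (0 <= Psoma pi q mu x B)%E.
Proof.
by rewrite PsomaE; apply: integral_ge0 => y _; rewrite lee_fin psoma_integrand_ge0.
Qed.

Lemma Psoma_set0 x : Psoma pi q mu x set0 = 0%E.
Proof.
rewrite PsomaE; apply: integral0_eq => y _; congr EFin.
by rewrite /psoma_integrand indic0 mulr0 addr0 big1 // => i _; rewrite mulr0.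
Qed.

Lemma Psoma_setT x : (\int[mu]_y (q y)%:E = 1)%E -> Psoma pi q mu x setT = 1%E.
Proof.
move=> <-; rewrite PsomaE; apply: eq_integral => y _; congr EFin.
rewrite /psoma_integrand indicT /= mulr1 /reject_rate -big_split.
rewrite -(sum_proposal_rate n_gt0 q_gt0 pi_gt0 x y).
by apply: eq_bigr => i _ /=; rewrite /accept_rate; ring.
Qed.

Lemma psoma_integrand_bigcup (F : (set (n.-tuple X))^nat) x y : trivIset setT F ->
  (psoma_integrand (\bigcup_k F k) x y)%:E =
  (\sum_(k <oo) (psoma_integrand (F k) x y)%:E)%E.
Proof.
move=> tF.
have scale_bigcup (c : R) z : 0 <= c ->
    (c * \1_(\bigcup_k F k) z)%:E = (\sum_(k <oo) (c * \1_(F k) z)%:E)%E.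
  by move=> c0; rewrite EFinM indic_bigcup // -nneseriesZl.
rewrite /psoma_integrand EFinD -sumEFin.
under [RHS]eq_eseriesr do rewrite EFinD -sumEFin.
rewrite nneseriesD; last 2 first.
- by move=> k _ _; apply: sume_ge0 => i _; rewrite lee_fin mulr_ge0 ?accept_rate_ge0.
- by move=> k _ _; rewrite lee_fin mulr_ge0 ?reject_rate_ge0.
rewrite nneseries_sum; last by move=> i k _; rewrite lee_fin mulr_ge0 ?accept_rate_ge0.
congr (_ + _)%E; last by rewrite scale_bigcup ?reject_rate_ge0.
by apply: eq_bigr => i _; rewrite scale_bigcup ?accept_rate_ge0.
Qed.

Lemma Psoma_sigma_additive x : semi_sigma_additive (Psoma pi q mu x).
Proof.
move=> F mF tF mUF.
rewrite [X in _ --> X](_ : _ = (\sum_(k <oo) Psoma pi q mu x (F k))%E).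
  apply/cvg_closeP; split; last by rewrite closeE.
  by apply: is_cvg_nneseries => k _ _; exact: Psoma_ge0.
rewrite PsomaE; under eq_integral do rewrite psoma_integrand_bigcup //.
rewrite integral_nneseries //; last 2 first.
- move=> k; apply/measurable_EFinP.
  exact: measurable_fun_pair2 x (measurable_psoma_integrand (mF k)).
- by move=> k y _; rewrite lee_fin psoma_integrand_ge0.
by apply: eq_eseriesr => k _; rewrite PsomaE.
Qed.

Lemma measurable_Psoma B : measurable B ->
  measurable_fun [set: n.-tuple X] (fun x => Psoma pi q mu x B).
Proof.
move=> mB; under eq_fun do rewrite PsomaE.
have := measurable_integral_snd (F := fun p => (psoma_integrand B p.1 p.2)%:E).
apply; first by apply/measurable_EFinP; exact: measurable_psoma_integrand.
by move=> p; rewrite lee_fin psoma_integrand_ge0.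
Qed.

Definition differs_only_at x x' i :=
  (forall j, j != i -> tnth x' j = tnth x j) /\ tnth x' i != tnth x i.

Lemma differs_only_at_repl x i y : y != tnth x i -> differs_only_at x (repl x i y) i.
Proof.
by rewrite /differs_only_at tnth_repl eqxx => yx; split=> // j /negbTE ji; rewrite tnth_repl ji.
Qed.

Lemma differs_only_at_inj x x' i j :
  differs_only_at x x' i -> differs_only_at x x' j -> i = j.
Proof.
move=> [x'_off _] [_ x'_j]; apply/eqP; apply: contraNT x'_j.
by rewrite eq_sym => /x'_off ->.
Qed.

Lemma soma_dist_le1 x x' i : differs_only_at x x' i -> (soma_dist x x' <= 1)%N.
Proof.
move=> [x'_off _].
apply: (@leq_trans #|[set j | tnth (permt 1%g x) j != tnth x' j]|).
  exact: (@bigmin_le _ nat).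
rewrite -(cards1 i); apply: subset_leq_card; apply/fintype.subsetP => j.
rewrite !inE /= /permt tnth_mktuple perm1; apply: contraR => ji.
by rewrite x'_off ?eqxx.
Qed.

Definition proposal_density x x' := \sum_(i < n)
  if `[< differs_only_at x x' i >] then proposal_rate pi q i x (tnth x' i) else 0.

Lemma proposal_density_far x x' : (1 < soma_dist x x')%N -> proposal_density x x' = 0.
Proof.
move=> far; apply: big1 => i _; case: asboolP => // /soma_dist_le1.
by rewrite leqNgt far.
Qed.

Lemma proposal_density_at x x' i : differs_only_at x x' i ->
  proposal_density x x' = proposal_rate pi q i x (tnth x' i).
Proof.
move=> x'_i; rewrite /proposal_density (bigD1 i) //= asboolT // big1 ?addr0 // => j ji.
by case: asboolP => // /(differs_only_at_inj x'_i) ij; rewrite ij eqxx in ji.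
Qed.

Lemma Kprop_density x A : measurable A -> ~ A x ->
  Kprop pi q mu x A =
  (\sum_(i < n) \int[mu]_y (\1_A (repl x i y) * proposal_density x (repl x i y))%:E)%E.
Proof.
move=> mA Ax.
transitivity
  (\int[mu]_y \sum_(i < n) (proposal_rate pi q i x y * \1_A (repl x i y))%:E)%E.
  apply: eq_integral => y _; rewrite sumEFin mulr_sumr; congr EFin.
  by apply: eq_bigr => i _; rewrite mulrA.
rewrite ge0_integral_sum //; last 2 first.
- move=> i; apply/measurable_EFinP.
  apply: (measurable_fun_pair2 x
    (f := fun p => proposal_rate pi q i p.1 p.2 * \1_A (repl p.1 i p.2))).
  apply: measurable_funM; first exact: measurable_proposal_rate.
  exact: measurable_indic_repl.
- by move=> i y _; rewrite lee_fin mulr_ge0 ?proposal_rate_ge0.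
apply: eq_bigr => i _; apply: eq_integral => y _; congr EFin.
rewrite mulrC indicE.
case: (boolP (repl x i y \in A)) => [/set_mem Arepl|_]; last by rewrite !mul0r.
have yx : y != tnth x i by apply: contraPneq Ax => yx; rewrite -(repl_tnth x i) -yx.
by rewrite (proposal_density_at (differs_only_at_repl yx)) tnth_repl eqxx.
Qed.

Variable lam : {measure set (n.-tuple X) -> \bar R}.
Hypothesis lam_box : forall A : 'I_n -> set X, (forall i, measurable (A i)) ->
  lam (box A) = (\prod_(i < n) mu (A i))%E.
Hypothesis pi_perm : forall (s : 'S_n) x, pi (permt s x) = pi x.

Definition accept_flow i A B (p : T) :=
  \1_A p.1 * pi p.1 * accept_rate pi q i p.1 p.2 * \1_B (repl p.1 i p.2).

Definition reject_flow A B (p : T) :=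
  \1_A p.1 * pi p.1 * reject_rate pi q p.1 p.2 * \1_B p.1.

Lemma accept_flow_ge0 i A B p : 0 <= accept_flow i A B p.
Proof.
apply: mulr_ge0 => //; apply: mulr_ge0; last exact: accept_rate_ge0.
by apply: mulr_ge0 => //; exact/ltW.
Qed.

Lemma reject_flow_ge0 A B p : 0 <= reject_flow A B p.
Proof.
apply: mulr_ge0 => //; apply: mulr_ge0; last exact: reject_rate_ge0.
by apply: mulr_ge0 => //; exact/ltW.
Qed.

Lemma measurable_accept_flow i A B : measurable A -> measurable B ->
  measurable_fun setT (fun p => (accept_flow i A B p)%:E).
Proof.
move=> mA mB; apply/measurable_EFinP.
apply: measurable_funM; last exact: measurable_indic_repl.
apply: measurable_funM; last exact: measurable_accept_rate.
apply: measurable_funM; first exact: measurable_indic_fst.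
exact: measurableT_comp mpi measurable_fst.
Qed.

Lemma measurable_reject_flow A B : measurable A -> measurable B ->
  measurable_fun setT (fun p => (reject_flow A B p)%:E).
Proof.
move=> mA mB; apply/measurable_EFinP.
apply: measurable_funM; last exact: measurable_indic_fst.
apply: measurable_funM; last exact: measurable_reject_rate.
apply: measurable_funM; first exact: measurable_indic_fst.
exact: measurableT_comp mpi measurable_fst.
Qed.

Lemma accept_flow_swap_coord i A B p :
  accept_flow i A B (swap_coord i p) = accept_flow i B A p.
Proof.
case: p => x y; rewrite /accept_flow /= repl_repl repl_tnth.
transitivity (\1_A (repl x i y) * \1_B x *
  (pi (repl x i y) * accept_rate pi q i (repl x i y) (tnth x i))); first by ring.
by rewrite -(detailed_balance q_gt0 pi_gt0 pi_perm); ring.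
Qed.

Lemma reject_flowC A B p : reject_flow A B p = reject_flow B A p.
Proof. by rewrite /reject_flow; ring. Qed.

Lemma indic_pi_PsomaE A B x : measurable A -> measurable B ->
  ((\1_A x * pi x)%:E * Psoma pi q mu x B =
   \sum_(i < n) \int[mu]_y (accept_flow i A B (x, y))%:E +
   \int[mu]_y (reject_flow A B (x, y))%:E)%E.
Proof.
move=> mA mB.
have Api_ge0 : (0 <= (\1_A x * pi x)%:E)%E by rewrite lee_fin mulr_ge0 // ltW.
rewrite PsomaE -ge0_integralZl //; last 2 first.
- apply/measurable_EFinP.
  exact: measurable_fun_pair2 x (measurable_psoma_integrand mB).
- by move=> y _; rewrite lee_fin psoma_integrand_ge0.
rewrite -ge0_integral_sum //; last 2 first.
- by move=> i; exact: measurable_fun_pair2 x (measurable_accept_flow i mA mB).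
- by move=> i y _; rewrite lee_fin accept_flow_ge0.
rewrite -ge0_integralD //; first last.
- exact: measurable_fun_pair2 x (measurable_reject_flow mA mB).
- by move=> y _; rewrite lee_fin reject_flow_ge0.
- apply: emeasurable_sum => i.
  exact: measurable_fun_pair2 x (measurable_accept_flow i mA mB).
- by move=> y _; apply: sume_ge0 => i _; rewrite lee_fin accept_flow_ge0.
apply: eq_integral => y _; rewrite sumEFin -EFinD -EFinM; congr EFin.
rewrite /psoma_integrand mulrDr mulr_sumr /accept_flow /reject_flow /=.
by congr (_ + _); [apply: eq_bigr => i _|]; ring.
Qed.

Lemma integral_pi_Psoma A B : measurable A -> measurable B ->
  (\int[lam]_(x in A) ((pi x)%:E * Psoma pi q mu x B) =
   \sum_(i < n) \int[lam]_x \int[mu]_y (accept_flow i A B (x, y))%:E +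
   \int[lam]_x \int[mu]_y (reject_flow A B (x, y))%:E)%E.
Proof.
move=> mA mB; rewrite integral_mkcond.
transitivity (\int[lam]_x ((\1_A x * pi x)%:E * Psoma pi q mu x B))%E.
  apply: eq_integral => x _; rewrite patchE indicE.
  by case: (boolP (x \in A)) => _; rewrite ?mul1r ?mul0r ?mul0e.
under eq_integral do rewrite indic_pi_PsomaE //.
have accept_ge0 i x : (0 <= \int[mu]_y (accept_flow i A B (x, y))%:E)%E.
  by apply: integral_ge0 => y _; rewrite lee_fin accept_flow_ge0.
have reject_ge0 x : (0 <= \int[mu]_y (reject_flow A B (x, y))%:E)%E.
  by apply: integral_ge0 => y _; rewrite lee_fin reject_flow_ge0.
have m_accept i :
    measurable_fun setT (fun x => \int[mu]_y (accept_flow i A B (x, y))%:E)%E.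
  have := measurable_integral_snd (F := fun p => (accept_flow i A B p)%:E).
  by apply; [exact: measurable_accept_flow|move=> p; rewrite lee_fin accept_flow_ge0].
have m_reject : measurable_fun setT (fun x => \int[mu]_y (reject_flow A B (x, y))%:E)%E.
  have := measurable_integral_snd (F := fun p => (reject_flow A B p)%:E).
  by apply; [exact: measurable_reject_flow|move=> p; rewrite lee_fin reject_flow_ge0].
rewrite ge0_integralD //; last 2 first.
- by move=> x _; exact: sume_ge0.
- exact: emeasurable_sum.
by rewrite ge0_integral_sum.
Qed.

Lemma Psoma_reversible A B : measurable A -> measurable B ->
  (\int[lam]_(x in A) ((pi x)%:E * Psoma pi q mu x B) =
   \int[lam]_(x in B) ((pi x)%:E * Psoma pi q mu x A))%E.
Proof.
move=> mA mB; rewrite !integral_pi_Psoma //; congr (_ + _)%E.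
  apply: eq_bigr => i _.
  have maccept := measurable_accept_flow i mA mB.
  rewrite (integral_swap_coord mu_sigma_finite lam_box i maccept); last first.
    by move=> p; rewrite lee_fin accept_flow_ge0.
  by under eq_integral do under eq_integral do rewrite accept_flow_swap_coord.
by under eq_integral do under eq_integral do rewrite reject_flowC.
Qed.

End soma_kernel.

Theorem theorem1 (d : measure_display) (X : measurableType d) (R : realType)
  (n : nat) (mu : {measure set X -> \bar R})
  (lam : {measure set (n.-tuple X) -> \bar R})
  (pi : n.-tuple X -> R) (q : X -> R) :
  (0 < n)%N ->
  sigma_finite setT mu ->
  (* lam is the n-fold product measure mu^n on X^n *)
  (forall A : 'I_n -> set X, (forall i, measurable (A i)) ->
     lam [set x | forall i, A i (tnth x i)] = (\prod_(i < n) mu (A i))%E) ->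
  (* q is a probability density on X w.r.t. mu, positive *)
  measurable_fun setT q -> (forall y, 0 < q y) ->
  (\int[mu]_y (q y)%:E = 1)%E ->
  (* pi is a probability density on X^n w.r.t. mu^n, positive *)
  measurable_fun setT pi -> (forall x, 0 < pi x) ->
  (\int[lam]_x (pi x)%:E = 1)%E ->
  (* pi is permutation invariant *)
  (forall (s : 'S_n) (x : n.-tuple X), pi (permt s x) = pi x) ->
  [/\
   (* Stage 1: density of the proposal K^SOMA(. | x) w.r.t. the reference
      measure sum_i (pushforward of mu by y |-> [x_{-i},y]) *)
   forall x : n.-tuple X, exists k : n.-tuple X -> R,
     [/\ forall x', (1 < soma_dist x x')%N -> k x' = 0,
         forall (i : 'I_n) (x' : n.-tuple X), soma_dist x x' = 1%N ->
           (forall j, j != i -> tnth x' j = tnth x j) ->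
           tnth x' i != tnth x i ->
           k x' = q (tnth x' i) * wi pi q i (tnth x' i) x
                  / Wsum pi q (tnth x' i) x
       & forall A : set (n.-tuple X), measurable A -> ~ A x ->
           Kprop pi q mu x A =
           (\sum_(i < n) \int[mu]_y (\1_A (repl x i y) * k (repl x i y))%:E)%E],
   (* P_SOMA is a Markov transition kernel *)
   forall x : n.-tuple X,
     [/\ Psoma pi q mu x set0 = 0%E,
         (forall A, measurable A -> (0 <= Psoma pi q mu x A)%E),
         semi_sigma_additive (Psoma pi q mu x)
       & Psoma pi q mu x setT = 1%E],
   (forall A : set (n.-tuple X), measurable A ->
      measurable_fun [set: n.-tuple X]
        (fun x : n.-tuple X => (Psoma pi q mu x A : \bar R)))
  & (* P_SOMA is reversible with respect to pi *)
   forall A B : set (n.-tuple X), measurable A -> measurable B ->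
     (\int[lam]_(x in A) ((pi x)%:E * Psoma pi q mu x B) =
      \int[lam]_(x in B) ((pi x)%:E * Psoma pi q mu x A))%E].
Proof.
move=> n_gt0 mu_sf lam_box mq q_gt0 q_int1 mpi pi_gt0 _ pi_perm; split.
- move=> x; exists (proposal_density pi q x); split.
  + by move=> x'; exact: proposal_density_far.
  + move=> i x' _ x'_off x'_i; rewrite -mulrA.
    exact: proposal_density_at (conj x'_off x'_i).
  + by move=> A mA Ax; exact: Kprop_density.
- move=> x; split=> [|A _||].
  + exact: Psoma_set0.
  + exact: Psoma_ge0.
  + exact: Psoma_sigma_additive.
  + exact: Psoma_setT.
- by move=> A mA; exact: measurable_Psoma.
- by move=> A B mA mB; exact: Psoma_reversible.
Qed.
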